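(* Let $(L,F,R)$ be an adjoint triple of covariant functors $F:\mathcal{A}\to \mathcal{B}$ and $L,R:\mathcal{B}\to \mathcal{A}$ between abelian categories (that is, $L$ is left adjoint to $F$ and $R$ is right adjoint to $F$). (1) Let $M,N$ be objects of $\mathcal{A}$ and assume $F$ is fully faithful. Then $N$ is strongly $M$-Rickart in $\mathcal{A}$ if and only if $F(N)$ is strongly $F(M)$-Rickart in $\mathcal{B}$; and $N$ is dual strongly $M$-Rickart in $\mathcal{A}$ if and only if $F(N)$ is dual strongly $F(M)$-Rickart in $\mathcal{B}$. (2) Let $M,N$ be objects of $\mathcal{B}$ and assume $L$ (or $R$) is fully faithful. Then (i) $N$ is strongly $M$-Rickart in $\mathcal{B}$ if and only if $R(N)$ is strongly $R(M)$-Rickart in $\mathcal{A}$; (ii) $N$ is dual strongly $M$-Rickart in $\mathcal{B}$ if and only if $L(N)$ is dual strongly $L(M)$-Rickart in $\mathcal{A}$.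
   Context: A morphism $f:X\to Y$ is a section if $f'f=1_X$ for some $f'$, a retraction if $ff'=1_Y$ for some $f'$. A monomorphism $k:K\to X$ is fully invariant if for every $h:X\to X$ there is $\alpha:K\to K$ with $hk=k\alpha$; an epimorphism $c:X\to C$ is fully coinvariant if for every $h:X\to X$ there is $\gamma:C\to C$ with $ch=\gamma c$. For objects $M,N$: $N$ is strongly $M$-Rickart if the kernel of every morphism $f:M\to N$ is a fully invariant section; $N$ is dual strongly $M$-Rickart if the cokernel of every morphism $f:M\to N$ is a fully coinvariant retraction. *)

From HB Require Import structures.
From mathcomp Require Import all_boot all_algebra.
Set Implicit Arguments. Unset Strict Implicit. Unset Printing Implicit Defensive.
Import GRing.Theory.
Local Open Scope ring_scope.

Record precat := PreCat {
  Ob : Type;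
  Hom : Ob -> Ob -> zmodType;
  comp : forall X Y Z : Ob, Hom Y Z -> Hom X Y -> Hom X Z;
  idm : forall X : Ob, Hom X X;
  comp_assoc : forall X Y Z W (h : Hom Z W) (g : Hom Y Z) (f : Hom X Y),
      comp h (comp g f) = comp (comp h g) f;
  comp_idl : forall X Y (f : Hom X Y), comp (idm Y) f = f;
  comp_idr : forall X Y (f : Hom X Y), comp f (idm X) = f;
  comp_addl : forall X Y Z (g g' : Hom Y Z) (f : Hom X Y),
      comp (g + g') f = comp g f + comp g' f;
  comp_addr : forall X Y Z (g : Hom Y Z) (f f' : Hom X Y),
      comp g (f + f') = comp g f + comp g f'
}.

Arguments Hom {C} X Y : rename.
Arguments comp {C X Y Z} g f : rename.
Arguments idm {C} X : rename.

Section CatDefs.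
Variable C : precat.

Definition monic {X Y : Ob C} (f : Hom X Y) : Prop :=
  forall Z (g h : Hom Z X), comp f g = comp f h -> g = h.
Definition epic {X Y : Ob C} (f : Hom X Y) : Prop :=
  forall Z (g h : Hom Y Z), comp g f = comp h f -> g = h.

Definition is_kernel {X Y K : Ob C} (f : Hom X Y) (k : Hom K X) : Prop :=
  comp f k = 0 /\
  forall Z (g : Hom Z X), comp f g = 0 -> exists! u : Hom Z K, comp k u = g.

Definition is_cokernel {X Y Q : Ob C} (f : Hom X Y) (c : Hom Y Q) : Prop :=
  comp c f = 0 /\
  forall Z (g : Hom Y Z), comp g f = 0 -> exists! u : Hom Q Z, comp u c = g.

Definition is_abelian : Prop :=
  (exists Z : Ob C, forall X, (forall f g : Hom Z X, f = g) /\
                              (forall f g : Hom X Z, f = g)) /\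
  (forall X Y : Ob C, exists P (i1 : Hom X P) (i2 : Hom Y P)
                             (p1 : Hom P X) (p2 : Hom P Y),
      [/\ comp p1 i1 = idm X, comp p2 i2 = idm Y, comp p1 i2 = 0,
          comp p2 i1 = 0 & comp i1 p1 + comp i2 p2 = idm P]) /\
  (forall X Y (f : Hom X Y), exists K (k : Hom K X), is_kernel f k) /\
  (forall X Y (f : Hom X Y), exists Q (c : Hom Y Q), is_cokernel f c) /\
  (forall X Y (f : Hom X Y), monic f -> exists Z (g : Hom Y Z), is_kernel g f) /\
  (forall X Y (f : Hom X Y), epic f -> exists Z (g : Hom Z X), is_cokernel g f).

Definition is_section {X Y : Ob C} (f : Hom X Y) : Prop :=
  exists f' : Hom Y X, comp f' f = idm X.
Definition is_retraction {X Y : Ob C} (f : Hom X Y) : Prop :=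
  exists f' : Hom Y X, comp f f' = idm Y.

Definition fully_invariant {K X : Ob C} (k : Hom K X) : Prop :=
  forall h : Hom X X, exists alpha : Hom K K, comp h k = comp k alpha.
Definition fully_coinvariant {X Q : Ob C} (c : Hom X Q) : Prop :=
  forall h : Hom X X, exists gamma : Hom Q Q, comp c h = comp gamma c.

Definition strongly_rickart (M N : Ob C) : Prop :=
  forall (f : Hom M N) (K : Ob C) (k : Hom K M),
    is_kernel f k -> is_section k /\ fully_invariant k.

Definition dual_strongly_rickart (M N : Ob C) : Prop :=
  forall (f : Hom M N) (Q : Ob C) (c : Hom N Q),
    is_cokernel f c -> is_retraction c /\ fully_coinvariant c.

End CatDefs.

Record functor (C D : precat) := Functor {
  fob : Ob C -> Ob D;
  fmap : forall X Y : Ob C, Hom X Y -> Hom (fob X) (fob Y);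
  fmap_id : forall X, fmap (idm X) = idm (fob X);
  fmap_comp : forall X Y Z (g : Hom Y Z) (f : Hom X Y),
      fmap (comp g f) = comp (fmap g) (fmap f)
}.
Arguments fob {C D} F X : rename.
Arguments fmap {C D} F {X Y} f : rename.

Definition fully_faithful {C D : precat} (F : functor C D) : Prop :=
  forall X Y : Ob C, bijective (@fmap C D F X Y).

Definition adjoint {C D : precat} (G : functor C D) (H : functor D C) : Prop :=
  exists (eta : forall c : Ob C, Hom c (fob H (fob G c)))
         (eps : forall d : Ob D, Hom (fob G (fob H d)) d),
    [/\ forall c c' (f : Hom c c'),
          comp (fmap H (fmap G f)) (eta c) = comp (eta c') f,
        forall d d' (g : Hom d d'),
          comp g (eps d) = comp (eps d') (fmap G (fmap H g)),
        forall c, comp (eps (fob G c)) (fmap G (eta c)) = idm (fob G c)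
      & forall d, comp (fmap H (eps d)) (eta (fob H d)) = idm (fob H d)].

(* A right adjoint preserves kernels and a left adjoint preserves cokernels.
   A fully faithful functor [G] preserving kernels transports the property
   "every kernel of [f : M -> N] is a fully invariant section" in both
   directions: every [f' : G M -> G N] is some [G f], kernels are unique up to
   isomorphism, and sections and endomorphisms lift along [G].  The dual
   statements are the same ones in opposite categories.  Finally, in an
   adjoint triple [L -| F -| R] the bijection [Hom (F L x) y ~ Hom x (F R y)]
   turns precomposition with the unit of [L -| F] into postcomposition with
   the counit of [F -| R], so one is invertible exactly when the other is:
   [L] is fully faithful iff [R] is. *)

From mathcomp Require Import all_boot all_algebra.
Set Implicit Arguments. Unset Strict Implicit. Unset Printing Implicit Defensive.
Import GRing.Theory.
Local Open Scope ring_scope.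

Definition opposite (C : precat) : precat :=
  @PreCat (Ob C) (fun X Y => Hom Y X) (fun X Y Z g f => comp f g) (@idm C)
    (fun X Y Z W h g f => esym (comp_assoc f g h))
    (fun X Y f => comp_idr f) (fun X Y f => comp_idl f)
    (fun X Y Z g g' f => comp_addr f g g') (fun X Y Z g f f' => comp_addl f f' g).

Definition opposite_functor (C D : precat) (G : functor C D) :
    functor (opposite C) (opposite D) :=
  @Functor (opposite C) (opposite D) (fob G) (fun X Y f => fmap G f)
    (fmap_id G) (fun X Y Z g f => fmap_comp G f g).

Lemma fully_faithful_opposite (C D : precat) (G : functor C D) :
  fully_faithful (opposite_functor G) <-> fully_faithful G.
Proof. by split=> ffG X Y; exact: ffG Y X. Qed.

Section CategoryFacts.
Variable C : precat.

Lemma comp0r (X Y Z : Ob C) (g : Hom Y Z) : comp g (0 : Hom X Y) = 0.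
Proof. by apply: (@addrI _ (comp g 0)); rewrite -comp_addr !addr0. Qed.

Lemma comp0l (X Y Z : Ob C) (f : Hom X Y) : comp (0 : Hom Y Z) f = 0.
Proof. by apply: (@addrI _ (comp 0 f)); rewrite -comp_addl !addr0. Qed.

Definition has_terminal : Prop := exists Z : Ob C, forall X (f g : Hom X Z), f = g.
Definition has_initial : Prop := exists Z : Ob C, forall X (f g : Hom Z X), f = g.
Definition has_kernels : Prop :=
  forall (X Y : Ob C) (f : Hom X Y), exists K (k : Hom K X), is_kernel f k.
Definition has_cokernels : Prop :=
  forall (X Y : Ob C) (f : Hom X Y), exists Q (c : Hom Y Q), is_cokernel f c.

Lemma abelian_zero_kernels_cokernels :
  is_abelian C -> [/\ has_terminal, has_initial, has_kernels & has_cokernels].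
Proof.
case=> [[Z zeroZ] [_ [kerC [cokC _]]]].
by split=> //; exists Z => X; have [] := zeroZ X.
Qed.

Definition is_iso (X Y : Ob C) (f : Hom X Y) : Prop :=
  exists g : Hom Y X, comp g f = idm X /\ comp f g = idm Y.

Definition fully_invariant_section (K X : Ob C) (k : Hom K X) : Prop :=
  is_section k /\ fully_invariant k.

Lemma kernel_fully_invariant_section (X Y K K' : Ob C) (f : Hom X Y)
    (k : Hom K X) (k' : Hom K' X) :
  is_kernel f k -> is_kernel f k' ->
  fully_invariant_section k -> fully_invariant_section k'.
Proof.
move=> [fk0 kuniv] [fk'0 k'univ] [[s sk] kinv].
have [u [ku _]] := kuniv _ _ fk'0.
have [v [k'v _]] := k'univ _ _ fk0.
have vu : comp v u = idm K'.
  have [w [_ k'w]] := k'univ _ _ fk'0.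
  by rewrite -(k'w (comp v u)) ?(k'w (idm K')) ?comp_idr // comp_assoc k'v.
split; first by exists (comp v s); rewrite -comp_assoc -ku (comp_assoc s) sk comp_idl.
move=> h; have [a ha] := kinv h.
by exists (comp v (comp a u)); rewrite comp_assoc k'v -ku comp_assoc ha -comp_assoc.
Qed.

End CategoryFacts.

Definition preserves_kernels (C D : precat) (G : functor C D) : Prop :=
  forall X Y K (f : Hom X Y) (k : Hom K X),
    is_kernel f k -> is_kernel (fmap G f) (fmap G k).
Definition preserves_cokernels (C D : precat) (G : functor C D) : Prop :=
  forall X Y Q (f : Hom X Y) (c : Hom Y Q),
    is_cokernel f c -> is_cokernel (fmap G f) (fmap G c).

Section FullyFaithful.
Variables (C D : precat) (G : functor C D).
Hypothesis ffG : fully_faithful G.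

Lemma fmap_onto (X Y : Ob C) (g : Hom (fob G X) (fob G Y)) :
  exists f : Hom X Y, fmap G f = g.
Proof. by have [Ginv _ GK] := ffG X Y; exists (Ginv g). Qed.

Lemma fully_faithful_fully_invariant_section (K X : Ob C) (k : Hom K X) :
  fully_invariant_section (fmap G k) <-> fully_invariant_section k.
Proof.
split=> [[[s' sk] kinv] | [[s sk] kinv]]; split.
- have [s sE] := fmap_onto s'; exists s; apply: (bij_inj (ffG K K)).
  by rewrite fmap_comp sE sk fmap_id.
- move=> h; have [a' ha'] := kinv (fmap G h); have [a aE] := fmap_onto a'.
  by exists a; apply: (bij_inj (ffG K X)); rewrite !fmap_comp aE.
- by exists (fmap G s); rewrite -fmap_comp sk fmap_id.
- move=> h'; have [h <-] := fmap_onto h'; have [a ha] := kinv h.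
  by exists (fmap G a); rewrite -!fmap_comp ha.
Qed.

Lemma fully_faithful_strongly_rickart :
  preserves_kernels G -> has_kernels C -> forall M N : Ob C,
  strongly_rickart M N <-> strongly_rickart (fob G M) (fob G N).
Proof.
move=> presG kerC M N; split=> [rickC f' K' k' k'ker | rickD f K k kker].
- have [f fE] := fmap_onto f'; have [K [k kker]] := kerC _ _ f.
  have Gkker := presG _ _ _ _ _ kker; rewrite fE in Gkker.
  apply: (kernel_fully_invariant_section Gkker k'ker).
  by apply/fully_faithful_fully_invariant_section; exact: rickC _ _ _ kker.
- by apply/fully_faithful_fully_invariant_section/(rickD (fmap G f)); exact: presG.
Qed.

End FullyFaithful.

Lemma fully_faithful_dual_strongly_rickart (C D : precat) (G : functor C D) :
  fully_faithful G -> preserves_cokernels G -> has_cokernels C ->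
  forall M N : Ob C,
  dual_strongly_rickart M N <-> dual_strongly_rickart (fob G M) (fob G N).
Proof.
move=> ffG presG cokC M N.
(* In [opposite C], cokernels, retractions and fully coinvariant epimorphisms
   are literally kernels, sections and fully invariant monomorphisms. *)
apply: (@fully_faithful_strongly_rickart _ _ (opposite_functor G)) => //.
- exact/fully_faithful_opposite.
- by move=> X Y Q f c; exact: presG.
- by move=> X Y f; exact: cokC.
Qed.

Section Adjunction.
Variables (C D : precat) (G : functor C D) (H : functor D C).
Variables (eta : forall c, Hom c (fob H (fob G c)))
          (eps : forall d, Hom (fob G (fob H d)) d).

Definition is_adjunction : Prop :=
  [/\ forall c c' (f : Hom c c'), comp (fmap H (fmap G f)) (eta c) = comp (eta c') f,
      forall d d' (g : Hom d d'), comp g (eps d) = comp (eps d') (fmap G (fmap H g)),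
      forall c, comp (eps (fob G c)) (fmap G (eta c)) = idm (fob G c)
    & forall d, comp (fmap H (eps d)) (eta (fob H d)) = idm (fob H d)].

Definition adj_transpose c d (g : Hom (fob G c) d) : Hom c (fob H d) :=
  comp (fmap H g) (eta c).
Definition adj_untranspose c d (f : Hom c (fob H d)) : Hom (fob G c) d :=
  comp (eps d) (fmap G f).

Lemma adj_transpose_comp c d d' (v : Hom d d') (g : Hom (fob G c) d) :
  adj_transpose (comp v g) = comp (fmap H v) (adj_transpose g).
Proof. by rewrite /adj_transpose fmap_comp comp_assoc. Qed.

Hypothesis adj : is_adjunction.

Lemma adj_transposeK {c d} : cancel (@adj_transpose c d) (@adj_untranspose c d).
Proof.
case: adj => _ eps_nat triangleG _ g.
by rewrite /adj_untranspose /adj_transpose fmap_comp comp_assoc -eps_nat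
  -comp_assoc triangleG comp_idr.
Qed.

Lemma adj_untransposeK {c d} : cancel (@adj_untranspose c d) (@adj_transpose c d).
Proof.
case: adj => eta_nat _ _ triangleH f.
by rewrite /adj_untranspose /adj_transpose fmap_comp -comp_assoc eta_nat
  comp_assoc triangleH comp_idl.
Qed.

Lemma adj_untranspose_comp c d d' (v : Hom d d') (f : Hom c (fob H d)) :
  adj_untranspose (comp (fmap H v) f) = comp v (adj_untranspose f).
Proof.
case: adj => _ eps_nat _ _.
by rewrite /adj_untranspose fmap_comp comp_assoc -eps_nat comp_assoc.
Qed.

End Adjunction.

Lemma is_adjunction_opposite (C D : precat) (G : functor C D) (H : functor D C)
    (eta : forall c, Hom c (fob H (fob G c)))
    (eps : forall d, Hom (fob G (fob H d)) d) :
  is_adjunction eta eps ->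
  is_adjunction (G := opposite_functor H) (H := opposite_functor G) eps eta.
Proof.
by case=> eta_nat eps_nat triangleG triangleH; split=> // *;
  rewrite /= ?eta_nat ?eps_nat.
Qed.

Lemma adjoint_opposite (C D : precat) (G : functor C D) (H : functor D C) :
  adjoint G H -> adjoint (opposite_functor H) (opposite_functor G).
Proof. by case=> eta [eps adj]; exists eps, eta; exact: is_adjunction_opposite. Qed.

Section AdjointPreservation.
Variables (C D : precat) (G : functor C D) (H : functor D C).
Hypothesis GH : adjoint G H.

(* [H] need not be additive; it maps [0] to [0] because [0] factors through
   the terminal object [Z], and [H Z] is again terminal. *)
Lemma right_adjoint_fmap0 (X Y : Ob D) :
  has_terminal D -> fmap H (0 : Hom X Y) = 0.
Proof.
case: GH => eta [eps adj] [Z Zterminal].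
have HZterminal W (f g : Hom W (fob H Z)) : f = g.
  rewrite -(adj_untransposeK adj f) -(adj_untransposeK adj g).
  by rewrite (Zterminal _ (adj_untranspose eps f) (adj_untranspose eps g)).
have -> : (0 : Hom X Y) = comp (0 : Hom Z Y) (0 : Hom X Z) by rewrite comp0r.
by rewrite fmap_comp (HZterminal _ (fmap H 0) 0) comp0r.
Qed.

Lemma right_adjoint_preserves_kernels : has_terminal D -> preserves_kernels H.
Proof.
move=> /right_adjoint_fmap0 H0; case: GH => eta [eps adj].
have untranspose0 c d : adj_untranspose eps (0 : Hom c (fob H d)) = 0.
  have transpose0 : adj_transpose eta (0 : Hom (fob G c) d) = 0.
    by rewrite /adj_transpose H0 comp0l.
  by rewrite -transpose0 (adj_transposeK adj).
move=> X Y K f k [fk0 kuniv]; split; first by rewrite -fmap_comp fk0 H0.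
move=> W g Ffg0.
have [u [ku u_uniq]] : exists! u, comp k u = adj_untranspose eps g.
  by apply: kuniv; rewrite -(adj_untranspose_comp adj) Ffg0 untranspose0.
exists (adj_transpose eta u); split.
  by rewrite -adj_transpose_comp ku adj_untransposeK.
move=> u' Fku'; rewrite -[u'](adj_untransposeK adj).
by rewrite (u_uniq (adj_untranspose eps u')) // -(adj_untranspose_comp adj) Fku'.
Qed.

End AdjointPreservation.

Lemma left_adjoint_preserves_cokernels (C D : precat) (G : functor C D)
    (H : functor D C) :
  adjoint G H -> has_initial C -> preserves_cokernels G.
Proof.
move=> /adjoint_opposite GHop initC X Y Q f c.
exact: (right_adjoint_preserves_kernels GHop initC).
Qed.

Section UnitCounit.
Variables (C D : precat) (G : functor C D) (H : functor D C).
Variables (eta : forall c, Hom c (fob H (fob G c)))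
          (eps : forall d, Hom (fob G (fob H d)) d).
Hypothesis adj : is_adjunction eta eps.

Lemma fully_faithful_left_adjoint_unit_iso :
  fully_faithful G -> forall c, is_iso (eta c).
Proof.
case: adj => eta_nat _ triangleG triangleH ffG c.
have [Ginv _ GK] := ffG (fob H (fob G c)) c.
exists (Ginv (eps (fob G c))); split.
  by apply: (bij_inj (ffG c c)); rewrite fmap_comp GK triangleG fmap_id.
by rewrite -eta_nat GK triangleH.
Qed.

Lemma counit_iso_fully_faithful_right_adjoint :
  (forall d, is_iso (eps d)) -> fully_faithful H.
Proof.
case: adj => eta_nat eps_nat _ triangleH epsiso X Y.
have [s [s_eps eps_s]] := epsiso X.
have Hs : fmap H s = eta (fob H X).
  by rewrite -[RHS]comp_idl -fmap_id -s_eps fmap_comp -comp_assoc triangleH comp_idr.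
exists (fun h => comp (eps Y) (comp (fmap G h) s)) => [g|h].
  by rewrite comp_assoc -eps_nat -comp_assoc eps_s comp_idr.
by rewrite !fmap_comp Hs eta_nat comp_assoc triangleH comp_idl.
Qed.

End UnitCounit.

Section AdjointTriple.
Variables (A B : precat) (L : functor B A) (F : functor A B) (R : functor B A).
Variables (eta1 : forall x, Hom x (fob F (fob L x)))
          (eps1 : forall a, Hom (fob L (fob F a)) a)
          (eta2 : forall a, Hom a (fob R (fob F a)))
          (eps2 : forall y, Hom (fob F (fob R y)) y).
Hypotheses (adjLF : is_adjunction eta1 eps1) (adjFR : is_adjunction eta2 eps2).

Lemma counit_comp_triple_transpose x y (g : Hom (fob F (fob L x)) y) :
  comp (eps2 y) (adj_transpose eta1 (adj_transpose eta2 g)) = comp g (eta1 x).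
Proof.
rewrite /adj_transpose [in LHS]comp_assoc.
by rewrite -[comp (eps2 y) _]/(adj_untranspose eps2 _) (adj_transposeK adjFR).
Qed.

Lemma unit_iso_counit_iso :
  (forall x, is_iso (eta1 x)) -> forall y, is_iso (eps2 y).
Proof.
move=> eta1iso y.
have untranspose2K x (a : Hom x (fob F (fob R y))) :
    adj_transpose eta1 (adj_transpose eta2
      (adj_untranspose eps2 (adj_untranspose eps1 a))) = a.
  by rewrite (adj_untransposeK adjFR) (adj_untransposeK adjLF).
have eps2_monic x (a b : Hom x (fob F (fob R y))) :
    comp (eps2 y) a = comp (eps2 y) b -> a = b.
  have [t [_ eta1t]] := eta1iso x.
  rewrite -(untranspose2K x a) -(untranspose2K x b).
  rewrite !counit_comp_triple_transpose => e.
  congr (adj_transpose eta1 (adj_transpose eta2 _)).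
  by rewrite -[LHS]comp_idr -eta1t comp_assoc e -comp_assoc eta1t comp_idr.
have [t [t_eta1 _]] := eta1iso y.
have eps2_t : comp (eps2 y) (adj_transpose eta1 (adj_transpose eta2 t)) = idm y.
  by rewrite counit_comp_triple_transpose t_eta1.
exists (adj_transpose eta1 (adj_transpose eta2 t)); split=> //.
by apply: eps2_monic; rewrite comp_assoc eps2_t comp_idl comp_idr.
Qed.

End AdjointTriple.

Lemma adjoint_triple_fully_faithful_right (A B : precat) (L : functor B A)
    (F : functor A B) (R : functor B A) :
  adjoint L F -> adjoint F R -> fully_faithful L -> fully_faithful R.
Proof.
case=> eta1 [eps1 adjLF] [eta2 [eps2 adjFR]] ffL.
apply: (counit_iso_fully_faithful_right_adjoint adjFR).
apply: (unit_iso_counit_iso adjLF adjFR).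
exact: fully_faithful_left_adjoint_unit_iso adjLF ffL.
Qed.

Lemma adjoint_triple_fully_faithful (A B : precat) (L : functor B A)
    (F : functor A B) (R : functor B A) :
  adjoint L F -> adjoint F R -> fully_faithful L <-> fully_faithful R.
Proof.
move=> LF FR; split; first exact: adjoint_triple_fully_faithful_right LF FR.
move=> ffR; apply/(@fully_faithful_opposite _ _ L).
apply: (adjoint_triple_fully_faithful_right (adjoint_opposite FR)
          (adjoint_opposite LF)).
exact/(@fully_faithful_opposite _ _ R).
Qed.

Theorem corollary4p3 (A B : precat) (hA : is_abelian A) (hB : is_abelian B)
    (L : functor B A) (F : functor A B) (R : functor B A)
    (hLF : adjoint L F) (hFR : adjoint F R) :
  (forall M N : Ob A, fully_faithful F ->
     (strongly_rickart M N <-> strongly_rickart (fob F M) (fob F N)) /\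
     (dual_strongly_rickart M N <-> dual_strongly_rickart (fob F M) (fob F N))) /\
  (forall M N : Ob B, fully_faithful L \/ fully_faithful R ->
     (strongly_rickart M N <-> strongly_rickart (fob R M) (fob R N)) /\
     (dual_strongly_rickart M N <-> dual_strongly_rickart (fob L M) (fob L N))).
Proof.
have [termA initA kerA cokA] := abelian_zero_kernels_cokernels hA.
have [termB initB kerB cokB] := abelian_zero_kernels_cokernels hB.
split=> [M N ffF | M N ffLR].
  split.
  - exact: (fully_faithful_strongly_rickart ffF
             (right_adjoint_preserves_kernels hLF termA) kerA M N).
  - exact: (fully_faithful_dual_strongly_rickart ffF
             (left_adjoint_preserves_cokernels hFR initA) cokA M N).
have [ffL ffR] : fully_faithful L /\ fully_faithful R.
  have ffL_ffR := adjoint_triple_fully_faithful hLF hFR.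
  by case: ffLR => ff; split=> //; [apply: ffL_ffR.1 | apply: ffL_ffR.2].
split.
- exact: (fully_faithful_strongly_rickart ffR
           (right_adjoint_preserves_kernels hFR termB) kerB M N).
- exact: (fully_faithful_dual_strongly_rickart ffL
           (left_adjoint_preserves_cokernels hLF initB) cokB M N).
Qed.
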